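(* For all $d,N\in\mathbb{N}$, $B_{d,2}(1,\dots,1)=1$, where $(1,\dots,1)\in\mathbb{N}^N$.
   Context: $T_{d,2}=\mathbb{R}\oplus\mathbb{R}^d\oplus\mathbb{R}^{d\times d}$ with truncated tensor product; $\mathfrak{g}_{d,2}$ is the smallest Lie subalgebra (commutator bracket) containing $e_1,\dots,e_d$; $\exp(\mathbf{z})=1+\mathbf{z}+\mathbf{z}^{\otimes2}/2$; $\mathcal{G}_{d,2}=\exp(\mathfrak{g}_{d,2})$ (a group), $\log=\exp^{-1}$. For $\mathbf{x}\in\mathcal{G}_{d,2}^N$, $\mathsf{bary}(\mathbf{x})$ is the unique $\mathbf{m}\in\mathcal{G}_{d,2}$ with $\sum_{i=1}^N\log(\mathbf{m}^{-1}\mathbf{x}_i)=0$. For a path $X:[0,1]\to\mathbb{R}^d$ its $2$-truncated signature is $\sigma(X)=1\oplus(X(1)-X(0))\oplus\big(\int_{0<t_1<t_2<1}\dot X_{w_1}(t_1)\dot X_{w_2}(t_2)\,dt_1dt_2\big)_{w_1,w_2}$. $\mathcal{L}^{\mathrm{im}}_{d,\le 2,m}$ is the set of $\sigma(X)$ for piecewise linear $X$ with $m$ segments, and $B_{d,2}(\alpha)=\min\{m\in\mathbb{N}:\mathsf{bary}(\mathcal{L}^{\mathrm{im}}_{d,\le 2,\alpha_1}\times\dots\times\mathcal{L}^{\mathrm{im}}_{d,\le 2,\alpha_N})\subseteq\mathcal{L}^{\mathrm{im}}_{d,\le 2,m}\}$. *)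

From Stdlib Require Import Reals.
From Coquelicot Require Import Coquelicot.
From mathcomp Require Import ssreflect ssrfun ssrbool eqtype ssrnat seq fintype bigop.

Set Implicit Arguments.
Unset Strict Implicit.
Unset Printing Implicit Defensive.

Local Open Scope R_scope.

Record T (d : nat) := mkT {
  t0 : R;
  t1 : 'I_d -> R;
  t2 : 'I_d -> 'I_d -> R }.

Definition T_eq d (x y : T d) : Prop :=
  t0 x = t0 y /\ (forall i, t1 x i = t1 y i) /\ (forall i j, t2 x i j = t2 y i j).

Definition Tone d : T d := mkT 1 (fun _ => 0) (fun _ _ => 0).
Definition Tzero d : T d := mkT 0 (fun _ => 0) (fun _ _ => 0).
Definition Tadd d (x y : T d) : T d :=
  mkT (t0 x + t0 y) (fun i => t1 x i + t1 y i) (fun i j => t2 x i j + t2 y i j).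
Definition Tscale d (c : R) (x : T d) : T d :=
  mkT (c * t0 x) (fun i => c * t1 x i) (fun i j => c * t2 x i j).
Definition Topp d (x : T d) : T d := Tscale (-1) x.
(* truncated tensor product *)
Definition Tmul d (x y : T d) : T d :=
  mkT (t0 x * t0 y)
      (fun i => t0 x * t1 y i + t1 x i * t0 y)
      (fun i j => t0 x * t2 y i j + t1 x i * t1 y j + t2 x i j * t0 y).
Definition Te d (k : 'I_d) : T d :=
  mkT 0 (fun i => if i == k then 1 else 0) (fun _ _ => 0).
Definition Tbracket d (x y : T d) : T d := Tadd (Tmul x y) (Topp (Tmul y x)).

Definition Texp d (z : T d) : T d :=
  Tadd (Tadd (Tone d) z) (Tscale (/2) (Tmul z z)).

Definition lie_subalgebra d (S : T d -> Prop) : Prop :=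
  S (Tzero d) /\
  (forall x y, S x -> S y -> S (Tadd x y)) /\
  (forall c x, S x -> S (Tscale c x)) /\
  (forall x y, S x -> S y -> S (Tbracket x y)).

Definition in_g d (z : T d) : Prop :=
  forall S : T d -> Prop, lie_subalgebra S -> (forall k, S (Te k)) -> S z.

Definition in_G d (x : T d) : Prop := exists z, in_g z /\ T_eq (Texp z) x.

(* m is a barycenter of x : sum_i log(m^{-1} x_i) = 0, where
   z_i = log(m^{-1} x_i) is the element of g with exp(z_i) = m^{-1} x_i,
   i.e. m (x) exp(z_i) = x_i. *)
Definition is_bary d N (x : 'I_N -> T d) (m : T d) : Prop :=
  in_G m /\
  exists z : 'I_N -> T d,
    (forall i, in_g (z i) /\ T_eq (Tmul m (Texp (z i))) (x i)) /\
    T_eq (\big[@Tadd d/Tzero d]_(i < N) z i) (Tzero d).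

Definition piecewise_linear d (m : nat) (X : R -> 'I_d -> R) : Prop :=
  exists t : nat -> R,
    t 0%nat = 0 /\ t m = 1 /\ (forall k, (k < m)%nat -> t k < t k.+1) /\
    forall k, (k < m)%nat -> exists a b : 'I_d -> R,
      forall s, t k <= s <= t k.+1 -> forall w, X s w = a w + s * b w.

Definition sig2 d (X : R -> 'I_d -> R) : T d :=
  mkT 1 (fun w => X 1 w - X 0 w)
    (fun w1 w2 =>
       RInt (fun t2 =>
         RInt (fun t1 => Derive (fun s => X s w1) t1) 0 t2
         * Derive (fun s => X s w2) t2) 0 1).

Definition in_L d (m : nat) (x : T d) : Prop :=
  exists X, piecewise_linear m X /\ T_eq (sig2 X) x.

Definition bary_in_L d N (alpha : 'I_N -> nat) (m : nat) : Prop :=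
  forall x : 'I_N -> T d, (forall i, in_L (alpha i) (x i)) ->
    forall b, is_bary x b -> in_L m b.

Definition is_B d N (alpha : 'I_N -> nat) (b : nat) : Prop :=
  bary_in_L d alpha b /\ forall m, bary_in_L d alpha m -> (b <= m)%nat.

(* A segment with increment v has signature exp(v) = (1, v, v v^T / 2), and these are
   exactly the elements of L_1.  If m = (1, b, M) satisfies m exp(z_k) = exp(v_k), solving
   for the level-two part of z_k shows that the linear functional
   z |-> z^{ij} + (b^i z^j - z^i b^j) / 2 takes the same value b^i b^j / 2 - M^{ij} at every
   z_k.  Summing over k and using sum_k z_k = 0 gives M = b b^T / 2, so m = exp(b) is again
   in L_1.  Conversely L_0 is empty, since no path made of zero segments joins 0 to 1. *)

From Stdlib Require Import Reals Lra.
From Coquelicot Require Import Coquelicot.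
From mathcomp Require Import ssreflect ssrfun ssrbool eqtype ssrnat seq fintype bigop.

Set Implicit Arguments.
Unset Strict Implicit.
Unset Printing Implicit Defensive.

Local Open Scope R_scope.

Lemma T_eq_sym d (x y : T d) : T_eq x y -> T_eq y x.
Proof. by case=> [e0 [e1 e2]]; split; [|split] => *; rewrite ?e0 ?e1 ?e2. Qed.

Lemma T_eq_trans d (x y z : T d) : T_eq x y -> T_eq y z -> T_eq x z.
Proof.
case=> [e0 [e1 e2]] [f0 [f1 f2]].
by split; [|split] => *; rewrite ?e0 ?e1 ?e2 ?f0 ?f1 ?f2.
Qed.

Lemma sum_const_R n (c : R) : \big[Rplus/0]_(i < n) c = INR n * c.
Proof.
rewrite big_const_ord; elim: n => [|n IH]; first by rewrite /=; ring.
by rewrite iterS IH S_INR; ring.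
Qed.

Lemma T_eq_sum0 d n : T_eq (\big[@Tadd d/Tzero d]_(i < n) Tzero d) (Tzero d).
Proof.
split; [|split] => [|i|i j] /=.
- rewrite (big_morph (@t0 d) (id1 := 0) (op1 := Rplus)) // sum_const_R /=; ring.
- rewrite (big_morph (fun w : T d => t1 w i) (id1 := 0) (op1 := Rplus)) //.
  rewrite sum_const_R /=; ring.
- rewrite (big_morph (fun w : T d => t2 w i j) (id1 := 0) (op1 := Rplus)) //.
  rewrite sum_const_R /=; ring.
Qed.

Definition seg_sig d (v : 'I_d -> R) : T d := mkT 1 v (fun i j => v i * v j / 2).

Lemma Derive_affine (X : R -> R) lo hi a c t : lo < t < hi ->
  (forall s, lo <= s <= hi -> X s = a + s * c) -> Derive X t = c.
Proof.
move=> ht hX.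
have hpos : 0 < Rmin (t - lo) (hi - t) by apply: Rmin_pos; lra.
rewrite (@Derive_ext_loc X (fun s => a + s * c)).
  by apply: is_derive_unique; auto_derive => //; ring.
exists (mkposreal _ hpos) => s /= hs.
rewrite /ball /= /AbsRing_ball /abs /minus /plus /opp /= in hs.
apply: hX.
have := Rmin_l (t - lo) (hi - t); have := Rmin_r (t - lo) (hi - t).
move: hs; rewrite /Rabs; case: Rcase_abs => *; lra.
Qed.

Lemma sig2_affine d (X : R -> 'I_d -> R) a v :
  (forall s, 0 <= s <= 1 -> forall w, X s w = a w + s * v w) ->
  T_eq (sig2 X) (seg_sig v).
Proof.
move=> hX; split; [|split] => //= [w|i j]; first by rewrite !hX; lra.
have dX w t : 0 < t < 1 -> Derive (fun s => X s w) t = v w.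
  by move=> ht; apply: (Derive_affine (a := a w) ht) => s hs; apply: hX.
rewrite (@RInt_ext _ _ (fun t => v i * t * v j)); last first.
  move=> t; rewrite Rmin_left ?Rmax_right; try lra.
  move=> ht; rewrite dX //.
  rewrite (@RInt_ext _ _ (fun _ => v i)); first by rewrite RInt_const /scal /= /mult /=; ring.
  by move=> s; rewrite Rmin_left ?Rmax_right; try lra; move=> hs; apply: dX; lra.
apply: is_RInt_unique.
have := @is_RInt_derive _ (fun t => v i * v j * (t * t) / 2) (fun t => v i * t * v j) 0 1.
rewrite /minus /plus /opp /=.
have -> : v i * v j * (1 * 1) / 2 + - (v i * v j * (0 * 0) / 2) = v i * v j / 2 by field.
apply=> t _; first by auto_derive => //; field.
by apply: continuous_mult; [apply: continuous_mult|];
  [apply: continuous_const|apply: continuous_id|apply: continuous_const].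
Qed.

Lemma in_L_T_eq d m (x y : T d) : T_eq x y -> in_L m x -> in_L m y.
Proof. by move=> exy [X [hX eX]]; exists X; split=> //; apply: T_eq_trans exy. Qed.

Lemma in_L1_seg_sig d (v : 'I_d -> R) : in_L 1 (seg_sig v).
Proof.
exists (fun s w => s * v w); split; last first.
  by apply: (sig2_affine (a := fun _ => 0)) => s _ w; ring.
exists INR; split; [|split; [|split]] => //= [k|k _].
- by rewrite ltnS leqn0 => /eqP ->; rewrite /=; lra.
- by exists (fun _ => 0), v => s _ w; ring.
Qed.

Lemma in_L1_seg_sigP d (x : T d) : in_L 1 x -> exists v, T_eq (seg_sig v) x.
Proof.
case=> X [[t [t0_0 [t1_1 [_ hseg]]]] eX].
have [a [v hX]] := hseg 0%nat isT.
exists v; apply: T_eq_trans eX; apply: T_eq_sym; apply: (sig2_affine (a := a)).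
by move=> s hs; apply: hX; rewrite t0_0 t1_1.
Qed.

Lemma not_in_L0 d (x : T d) : ~ in_L 0 x.
Proof. by case=> X [[t [t0_0 [t0_1 _]]] _]; rewrite t0_0 in t0_1; lra. Qed.

Lemma in_g_t0 d (z : T d) : in_g z -> t0 z = 0.
Proof.
move=> hz; apply: (hz (fun z => t0 z = 0)) => //.
by split; [|split; [|split]] => //= [x y -> ->|c x ->|x y -> ->]; ring.
Qed.

Lemma in_G_t0 d (m : T d) : in_G m -> t0 m = 1.
Proof. by case=> z [/in_g_t0 z0 [<- _]]; rewrite /= z0; ring. Qed.

(* The (i, j) coordinate of z + [b, z] / 2, where b is embedded in level one. *)
Definition area_shift d (b : 'I_d -> R) i j (w : T d) : R :=
  t2 w i j + (b i * t1 w j - t1 w i * b j) / 2.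

Lemma area_shift_sum d (b : 'I_d -> R) i j N (F : 'I_N -> T d) :
  area_shift b i j (\big[@Tadd d/Tzero d]_(k < N) F k)
  = \big[Rplus/0]_(k < N) area_shift b i j (F k).
Proof. by apply: big_morph => [u v|]; rewrite /area_shift /=; field. Qed.

Lemma area_shift_log_seg_sig d (m z : T d) (v : 'I_d -> R) i j :
  t0 m = 1 -> t0 z = 0 -> T_eq (Tmul m (Texp z)) (seg_sig v) ->
  area_shift (t1 m) i j z = t1 m i * t1 m j / 2 - t2 m i j.
Proof.
move=> m0 z0 [_ [e1 e2]].
have := e2 i j; have := e1 j; have := e1 i; rewrite /= m0 z0 /area_shift => <- <-.
lra.
Qed.

Lemma bary_seg_sig d N (x : 'I_N -> T d) (m : T d) : (1 <= N)%nat ->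
  (forall k, exists v, T_eq (seg_sig v) (x k)) -> is_bary x m ->
  T_eq (seg_sig (t1 m)) m.
Proof.
move=> hN hx [/in_G_t0 m0 [z [hz [_ [sum1 sum2]]]]].
split; [|split] => //= i j.
have shift_z k : area_shift (t1 m) i j (z k) = t1 m i * t1 m j / 2 - t2 m i j.
  have [/in_g_t0 z0 ezk] := hz k; have [v ev] := hx k.
  exact: area_shift_log_seg_sig m0 z0 (T_eq_trans ezk (T_eq_sym ev)).
have := area_shift_sum (t1 m) i j z.
rewrite (eq_bigr _ (fun k _ => shift_z k)) sum_const_R /area_shift sum2 !sum1 /=.
have : 0 < INR N by apply: lt_0_INR; apply/ltP.
nra.
Qed.

Lemma is_bary_Tone d N : is_bary (fun _ : 'I_N => Tone d) (Tone d).
Proof.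
have exp0 : T_eq (Texp (Tzero d)) (Tone d).
  by split; [|split] => /= *; field.
have g0 : in_g (Tzero d) by move=> S [].
split; first by exists (Tzero d).
exists (fun _ => Tzero d); split; last exact: T_eq_sum0.
by move=> k; split=> //; split; [|split] => /= *; field.
Qed.

Theorem proposition7p1 (d N : nat) (hN : (1 <= N)%nat) :
  is_B d (fun _ : 'I_N => 1%nat) 1%nat.
Proof.
split.
- move=> x hx m hm.
  apply: in_L_T_eq (in_L1_seg_sig (t1 m)).
  exact: bary_seg_sig hN (fun k => in_L1_seg_sigP (hx k)) hm.
- case=> [|m] // hm.
  have hTone : in_L 1 (Tone d).
    by apply: in_L_T_eq (in_L1_seg_sig (fun _ => 0)); split; [|split] => /= *; field.
  by case: (not_in_L0 (hm _ (fun _ => hTone) _ (is_bary_Tone d N))).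
Qed.
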